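(* For all $n\ge 0$, $|F_n(321,2143,4123)|=\binom{n}{2}+1$.
   Context: A permutation $\pi$ avoids a classical pattern $p\in S_k$ if no subsequence of $\pi$ of length $k$ is order-isomorphic to $p$. A Fishburn permutation is a permutation $\pi=\pi_1\cdots\pi_n$ of $[n]$ for which there are no indices $i<j$ with $\pi_j<\pi_i<\pi_{i+1}$ and $\pi_i=\pi_j+1$. $F_n(\sigma_1,\dots,\sigma_k)$ denotes the set of Fishburn permutations of length $n$ avoiding each of the classical patterns $\sigma_1,\dots,\sigma_k$ (with $F_0$ containing only the empty permutation). *)

From mathcomp Require Import all_boot all_fingroup.
Set Implicit Arguments. Unset Strict Implicit. Unset Printing Implicit Defensive.

(* Permutations of [n] are represented as {perm 'I_n} (values 0..n-1, which is
   order-isomorphic to [n]); pi_i (1-based) corresponds to s (i-1) (0-based). *)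

Definition contains_pattern (n : nat) (s : {perm 'I_n}) (p : seq nat) : Prop :=
  exists f : 'I_(size p) -> 'I_n,
    (forall a b : 'I_(size p), a < b -> f a < f b) /\
    (forall a b : 'I_(size p),
        (s (f a) < s (f b)) = (nth 0 p a < nth 0 p b)).

Definition avoids (n : nat) (s : {perm 'I_n}) (p : seq nat) : Prop :=
  ~ contains_pattern s p.

Definition fishburn (n : nat) (s : {perm 'I_n}) : Prop :=
  ~ exists (i j : 'I_n) (Hi : i.+1 < n),
      [/\ i < j, s j < s i, s i < s (Ordinal Hi) & val (s i) = (s j).+1].

Definition in_F (n : nat) (pats : seq (seq nat)) (s : {perm 'I_n}) : Prop :=
  fishburn s /\ forall p, p \in pats -> avoids s p.

From mathcomp Require Import all_boot all_fingroup zify.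
Set Implicit Arguments. Unset Strict Implicit. Unset Printing Implicit Defensive.

(* The proof shows that the avoiders are exactly the identity
   and one permutation blk a b for each pair a < b < n:
   - blk a b has only the inversions (a, a+1), (a, b), (x, b), so it avoids
     everything (blk_avoider);
   - conversely, if a is the least point moved by an avoider g, then
     321 and 4123 force g a <= a+2, the Fishburn condition and 321 force
     g (a+1) = a, and 2143 forces g to be increasing off the positions
     [0, a+1] and b = g^-1 (g a - 1); since a permutation is determined by
     its relative order (order_iso_eq), g = blk a b (avoider_structure).
   Finally blk a b determines (a, b), since it moves exactly [a, b], which
   gives the count C(n, 2) + 1. *)

Definition nat_perm (n : nat) (g : nat -> nat) : Prop :=
  (forall i, i < n -> g i < n) /\ (forall i j, i < n -> j < n -> g i = g j -> i = j).

(* A permutation of [0, n) is determined by its relative order: its value at i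
   is the number of positions whose value is smaller. *)
Section NatPerm.
Variables (n : nat) (g : nat -> nat).
Hypothesis g_perm : nat_perm n g.

Lemma map_iota_perm : perm_eq (map g (iota 0 n)) (iota 0 n).
Proof.
case: g_perm => g_lt g_inj.
have uniq_g : uniq (map g (iota 0 n)).
  rewrite map_inj_in_uniq ?iota_uniq // => x y.
  by rewrite !mem_iota !add0n => hx hy /g_inj; apply.
have sub_g : {subset map g (iota 0 n) <= iota 0 n}.
  by move=> w /mapP [x]; rewrite !mem_iota !add0n => /g_lt + ->.
have [|_ eq_g] := uniq_min_size uniq_g sub_g; first by rewrite size_map.
exact: uniq_perm uniq_g (iota_uniq 0 n) eq_g.
Qed.

Lemma nat_perm_surj v : v < n -> exists2 i, i < n & g i = v.
Proof.
move=> vn; have : v \in iota 0 n by rewrite mem_iota.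
rewrite -(perm_mem map_iota_perm) => /mapP [i].
by rewrite mem_iota add0n => hi ->; exists i.
Qed.

Lemma count_below v : v <= n -> count (fun y => g y < v) (iota 0 n) = v.
Proof.
move=> vn; rewrite -(count_map g (fun w => w < v)) (seq.permP map_iota_perm).
by rewrite -size_filter (filter_iota_ltn 0 vn) size_iota.
Qed.
End NatPerm.

Lemma order_iso_eq n (g h : nat -> nat) :
  nat_perm n g -> nat_perm n h ->
  (forall y i, y < n -> i < n -> (g y < g i) = (h y < h i)) ->
  forall i, i < n -> g i = h i.
Proof.
move=> g_perm h_perm same_order i hi.
rewrite -(count_below g_perm (ltnW (g_perm.1 i hi))).
rewrite -(count_below h_perm (ltnW (h_perm.1 i hi))).
by apply: eq_in_count => y; rewrite mem_iota add0n => yn; apply: same_order.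
Qed.

Lemma eq_off_special n (S : pred nat) (g h : nat -> nat) :
  nat_perm n g -> nat_perm n h ->
  (forall y, y < n -> S y -> g y = h y) ->
  (forall y i, i < n -> S y -> ~~ S i -> g y < g i) ->
  (forall y i, i < n -> S y -> ~~ S i -> h y < h i) ->
  (forall y i, i < n -> ~~ S y -> ~~ S i -> y < i -> g y < g i) ->
  (forall y i, i < n -> ~~ S y -> ~~ S i -> y < i -> h y < h i) ->
  forall i, i < n -> g i = h i.
Proof.
move=> g_perm h_perm agree sep_g sep_h mono_g mono_h.
apply: order_iso_eq => // y i yn iN.
case Sy: (S y); case Si: (S i).
- by rewrite !agree.
- by rewrite sep_g ?sep_h ?Si.
- by rewrite ltnNge ltnW ?sep_g ?Sy // ltnNge ltnW ?sep_h ?Sy.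
have [yi|iy|<-] := ltngtP y i; last by rewrite !ltnn.
  by rewrite mono_g ?mono_h ?Sy ?Si.
by rewrite ltnNge ltnW ?mono_g ?Sy ?Si // ltnNge ltnW ?mono_h ?Sy ?Si.
Qed.

Definition pat321 (g : nat -> nat) (n : nat) : Prop := exists i j k,
  [/\ i < j, j < k, k < n, g k < g j & g j < g i].
Definition pat2143 (g : nat -> nat) (n : nat) : Prop := exists i j k l,
  [/\ i < j, j < k, k < l, l < n & [/\ g j < g i, g i < g l & g l < g k]].
Definition pat4123 (g : nat -> nat) (n : nat) : Prop := exists i j k l,
  [/\ i < j, j < k, k < l, l < n & [/\ g j < g k, g k < g l & g l < g i]].
Definition fish_violation (g : nat -> nat) (n : nat) : Prop := exists i j,
  [/\ i < j, j < n, i.+1 < n & [/\ g j < g i, g i < g i.+1 & g i = (g j).+1]].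

Definition avoider (g : nat -> nat) (n : nat) : Prop :=
  [/\ ~ pat321 g n, ~ pat2143 g n, ~ pat4123 g n & ~ fish_violation g n].

Lemma avoider_ext (g h : nat -> nat) n :
  (forall i, i < n -> g i = h i) -> avoider g n -> avoider h n.
Proof.
move=> e [N321 N2143 N4123 NF]; split.
- move=> [i [j [k [? ? ? ? ?]]]]; apply: N321; exists i, j, k.
  by rewrite !e //; lia.
- move=> [i [j [k [l [? ? ? ? [? ? ?]]]]]]; apply: N2143; exists i, j, k, l.
  by rewrite !e //; lia.
- move=> [i [j [k [l [? ? ? ? [? ? ?]]]]]]; apply: N4123; exists i, j, k, l.
  by rewrite !e //; lia.
- move=> [i [j [? ? ? [? ? ?]]]]; apply: NF; exists i, j.
  by rewrite !e //; lia.
Qed.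

Lemma avoider_id n : avoider id n.
Proof.
split.
- by case=> [i [j [k [*]]]]; lia.
- by case=> [i [j [k [l [? ? ? ? [*]]]]]]; lia.
- by case=> [i [j [k [l [? ? ? ? [*]]]]]]; lia.
- by case=> [i [j [? ? ? [*]]]]; lia.
Qed.

(* For a < b, [blk a b] is the permutation whose one-line notation is
     0 ... a-1, a+2, a, a+3, a+4, ..., b, a+1, b+1, ...      if a+1 < b,
     0 ... a-1, a+1, a, a+2, ...                             if b = a+1;
   these, together with the identity, are the members of F_n(321,2143,4123). *)
Definition blk (a b i : nat) : nat :=
  if i < a then i
  else if i == a then (if b == a.+1 then a.+1 else a.+2)
  else if i == a.+1 then a
  else if i < b then i.+1
  else if i == b then a.+1
  else i.

Ltac blk_cases := rewrite /blk; repeat case: ifP; move=> *; lia.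

Section Block.
Variables (a b : nat).
Hypothesis ab : a < b.

Lemma blk_lt n x : b < n -> x < n -> blk a b x < n.
Proof. move=> *; blk_cases. Qed.

Lemma blk_inj x y : blk a b x = blk a b y -> x = y.
Proof. blk_cases. Qed.

Lemma blk_nat_perm n : b < n -> nat_perm n (blk a b).
Proof. by move=> bn; split=> [x|x y _ _]; [apply: blk_lt | apply: blk_inj]. Qed.

Lemma blk_inversion x y : x < y -> blk a b y < blk a b x ->
  (x = a /\ (y = a.+1 \/ y = b)) \/ (a.+2 <= x < b /\ y = b).
Proof. move=> xy; blk_cases. Qed.

Lemma blk_avoider n : avoider (blk a b) n.
Proof.
have inv := blk_inversion; split.
- move=> [i [j [k [h1 h2 _ h4 h5]]]].
  by have := inv _ _ h1 h5; have := inv _ _ h2 h4; lia.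
- move=> [i [j [k [l [h1 h2 h3 _ [h5 h6 h7]]]]]].
  by have := inv _ _ h1 h5; have := inv _ _ h3 h7; move: h6; blk_cases.
- move=> [i [j [k [l [h1 h2 h3 _ [h5 h6 h7]]]]]].
  have := inv _ _ h1 (ltn_trans h5 (ltn_trans h6 h7)).
  have := inv _ _ (ltn_trans h1 h2) (ltn_trans h6 h7).
  have := inv _ _ (ltn_trans h1 (ltn_trans h2 h3)) h7; lia.
- move=> [i [j [h1 _ _ [h4 h5 h6]]]].
  have := inv _ _ h1 h4; move: h5 h6; blk_cases.
Qed.
End Block.

Definition special (a b : nat) : pred nat := fun y => (y <= a.+1) || (y == b).

Lemma blk_special_below a b y i : a < b -> special a b y -> ~~ special a b i ->
  blk a b y < blk a b i.
Proof.
rewrite /special => ab Sy /norP [ia ib].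
by case/orP: Sy => [|/eqP ->]; blk_cases.
Qed.

Lemma blk_increasing_off_special a b y i : a < b ->
  ~~ special a b y -> ~~ special a b i -> y < i -> blk a b y < blk a b i.
Proof. rewrite /special => ab /norP [ya yb] /norP [ia ib]; blk_cases. Qed.

Section Structure.
Variables (n : nat) (g : nat -> nat) (a : nat).
Hypothesis g_lt : forall i, i < n -> g i < n.
Hypothesis g_inj : forall i j, i < n -> j < n -> g i = g j -> i = j.
Hypothesis g_avoider : avoider g n.
Hypothesis a_lt_n : a < n.
Hypothesis fixed_below : forall i, i < a -> g i = i.
Hypothesis a_moved : g a != a.

Let g_neq i j : i < n -> j < n -> i != j -> g i != g j.
Proof. by move=> hi hj /eqP ij; apply/eqP => /g_inj; auto. Qed.

(* Values below a are used up by the fixed points. *)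
Lemma ge_least_moved i : i < n -> a <= i -> a <= g i.
Proof.
move=> hi ai; rewrite leqNgt; apply/negP => gia.
by have := g_inj (g_lt hi) hi (fixed_below gia); lia.
Qed.

Lemma least_moved_up : a < g a.
Proof. by have := ge_least_moved a_lt_n (leqnn a); move: a_moved; lia. Qed.

Lemma position_after v : a <= v -> v < n -> v != g a ->
  exists z, [/\ a < z, z < n & g z = v].
Proof.
move=> av vn vga; have [z zn gz] := nat_perm_surj (conj g_lt g_inj) vn.
exists z; split => //; rewrite ltn_neqAle; apply/andP; split.
  by apply: contraNneq vga => az; rewrite -gz -az.
by rewrite leqNgt; apply/negP => za; have := fixed_below za; lia.
Qed.

(* The values a, a+1, a+2 following a larger g a would form 321 or 4123. *)
Lemma least_moved_le : g a <= a.+2.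
Proof.
case: g_avoider => N321 _ N4123 _; rewrite leqNgt; apply/negP => big.
have gan := g_lt a_lt_n.
have [p0 [? ? g0]] := @position_after a (leqnn a) (ltn_trans least_moved_up gan) (ltac:(lia)).
have [p1 [? ? g1]] := @position_after a.+1 (leqnSn a) (ltac:(lia)) (ltac:(lia)).
have [p2 [? ? g2]] := @position_after a.+2 (ltac:(lia)) (ltac:(lia)) (ltac:(lia)).
have p01 : p0 < p1.
  case: (ltngtP p0 p1) => // h; last by move: g0 g1; rewrite h; lia.
  by case: N321; exists a, p1, p0; split; lia.
have p12 : p1 < p2.
  case: (ltngtP p1 p2) => // h; last by move: g1 g2; rewrite h; lia.
  by case: N321; exists a, p2, p1; split; lia.
by case: N4123; exists a, p0, p1, p2; repeat split; lia.
Qed.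

Lemma pred_position : exists b, [/\ a < b, b < n & g b = (g a).-1].
Proof.
have := least_moved_up; have := g_lt a_lt_n => *.
by apply: position_after; lia.
Qed.

Lemma succ_lt_n : a.+1 < n.
Proof. by have := least_moved_up; have := g_lt a_lt_n; lia. Qed.

(* If g (a+1) exceeded g a, then a and the position of g a - 1 would violate
   the Fishburn condition; otherwise g (a+1) = a+1 and a, a+1, g^-1(a) is 321. *)
Lemma least_moved_succ : g a.+1 = a.
Proof.
case: g_avoider => N321 _ _ NF; have [b [ab bn gb]] := pred_position.
have up := least_moved_up; have le := least_moved_le; have a1n := succ_lt_n.
have ge := ge_least_moved a1n (leqnSn a).
have ne := g_neq a1n a_lt_n (ltac:(lia) : a.+1 != a).
case: (ltnP (g a) (g a.+1)) => h.
  by case: NF; exists a, b; repeat split; lia.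
have [p [ap pn gp]] := @position_after a (leqnn a) (ltac:(lia)) (ltac:(lia)).
case: (eqVneq (g a.+1) a) => // ne_a.
have ne_p : a.+1 != p by apply: contraNneq ne_a => ->; rewrite gp.
by case: N321; exists a, a.+1, p; split; lia.
Qed.

Variable b : nat.
Hypotheses (ab : a < b) (bn : b < n) (gb : g b = (g a).-1).

Lemma least_moved_value : g a = if b == a.+1 then a.+1 else a.+2.
Proof.
have up := least_moved_up; have le := least_moved_le; have a1n := succ_lt_n.
case: eqP => [eb | nb]; first by move: gb; rewrite eb least_moved_succ; lia.
case: (eqVneq (g a) a.+1) => [e|]; last lia.
by case: nb; apply: g_inj => //; rewrite gb least_moved_succ e.
Qed.

Lemma agree_on_special y : special a b y -> g y = blk a b y.
Proof.
have ga := least_moved_value.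
case/orP => [ya|/eqP ->]; last by rewrite gb; move: ga; blk_cases.
case: (ltnP y a) => [ya'|ay]; first by rewrite fixed_below //; blk_cases.
have [->|->] : y = a \/ y = a.+1 by lia.
  by rewrite ga; blk_cases.
by rewrite least_moved_succ; blk_cases.
Qed.

Lemma special_le y : special a b y -> g y <= g a.
Proof.
have up := least_moved_up.
case/orP => [ya|/eqP ->]; last lia.
case: (ltnP y a) => [ya'|ay]; first by rewrite fixed_below //; lia.
have [->|->] : y = a \/ y = a.+1 by lia.
  exact: leqnn.
by rewrite least_moved_succ ltnW.
Qed.

Lemma rest_above i : i < n -> ~~ special a b i -> g a < g i.
Proof.
move=> hi /norP [ia ib]; have a1n := succ_lt_n.
have := least_moved_le; have := least_moved_succ; have := gb.
have := ge_least_moved hi (ltac:(lia)); have := g_neq hi bn ib.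
have := g_neq hi a_lt_n (ltac:(lia) : i != a).
by have := g_neq hi a1n (ltac:(lia) : i != a.+1); lia.
Qed.

(* Off the special positions g is increasing: a decrease y < i would give the
   2143 occurrence a, a+1, y, i. *)
Lemma increasing_off_special y i : i < n ->
  ~~ special a b y -> ~~ special a b i -> y < i -> g y < g i.
Proof.
case: g_avoider => _ N2143 _ _; move=> hi Sy Si yi; have yn := ltn_trans yi hi.
case: (ltngtP (g y) (g i)) => // [gt|eq].
  case: N2143; exists a, a.+1, y, i; move: Sy; rewrite /special negb_or.
  have := least_moved_up; have := least_moved_succ.
  by have := rest_above hi Si; repeat split; lia.
by move/eqP: (g_neq yn hi (ltac:(lia) : y != i)); rewrite eq.
Qed.

Lemma eq_blk i : i < n -> g i = blk a b i.
Proof.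
apply: (@eq_off_special n (special a b)).
- exact: (conj g_lt g_inj).
- exact: blk_nat_perm.
- by move=> y _; apply: agree_on_special.
- by move=> y i' hi Sy Si; apply: leq_ltn_trans (special_le Sy) (rest_above hi Si).
- by move=> y i' _; apply: blk_special_below.
- exact: increasing_off_special.
- by move=> y i' _; apply: blk_increasing_off_special.
Qed.
End Structure.

Theorem avoider_structure n (g : nat -> nat) :
  nat_perm n g -> avoider g n ->
  (forall i, i < n -> g i = i) \/
  exists a b, [/\ a < b, b < n & forall i, i < n -> g i = blk a b i].
Proof.
move=> [g_lt g_inj] g_avoider.
case: (boolP [exists i : 'I_n, g i != i]) => [/existsP [i0 moved0] | none_moved].
  right; have ex : exists i, (i < n) && (g i != i) by exists i0; rewrite ltn_ord.
  case: (ex_minnP ex) => a /andP [an moved] least.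
  have fixed_below i : i < a -> g i = i.
    move=> ia; apply/eqP; apply/negPn/negP => mi.
    by have := least i; rewrite mi (ltn_trans ia an) => /(_ isT); lia.
  have [b [ab bn gb]] := pred_position g_lt g_inj an fixed_below moved.
  by exists a, b; split => // i; apply: (eq_blk g_lt g_inj g_avoider).
left => i hi; apply/eqP.
by move/existsPn: none_moved => /(_ (Ordinal hi)); rewrite negbK.
Qed.

(* A permutation s of 'I_n, read as a function on nat (identity beyond n). *)
Section PermAsNat.
Variable n : nat.

Definition natf (s : {perm 'I_n}) (i : nat) : nat :=
  if @insub nat (fun k => k < n) _ i is Some x then val (s x) else i.

Lemma natfE s (x : 'I_n) : natf s x = s x.
Proof. by rewrite /natf valK. Qed.

Lemma natfO s i (hi : i < n) : natf s i = s (Ordinal hi).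
Proof. by rewrite -natfE. Qed.

Lemma natf_nat_perm s : nat_perm n (natf s).
Proof.
split=> [i hi|i j hi hj]; first by rewrite natfO.
by rewrite (natfO s hi) (natfO s hj) => /val_inj /perm_inj /(congr1 val).
Qed.

Lemma contains_at s (p pos : seq nat) (x0 : 'I_n) :
  (forall t, t < size p -> nth 0 pos t < n) ->
  (forall t u, t < u -> u < size p -> nth 0 pos t < nth 0 pos u) ->
  (forall t u, t < size p -> u < size p ->
     (natf s (nth 0 pos t) < natf s (nth 0 pos u)) = (nth 0 p t < nth 0 p u)) ->
  contains_pattern s p.
Proof.
move=> pos_lt pos_mono same_order.
exists (fun t => insubd x0 (nth 0 pos t)).
have val_pos (t : 'I_(size p)) : val (insubd x0 (nth 0 pos t)) = nth 0 pos t.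
  by rewrite val_insubd pos_lt.
split=> [t u tu|t u]; first by rewrite !val_pos; apply: pos_mono.
by rewrite -!natfE !val_pos same_order.
Qed.

Lemma contains321 s : contains_pattern s [:: 3; 2; 1] <-> pat321 (natf s) n.
Proof.
split=> [[f [mono same_order]] | [i [j [k [? ? kn ? ?]]]]].
  exists (f (@Ordinal 3 0 isT)), (f (@Ordinal 3 1 isT)), (f (@Ordinal 3 2 isT)).
  by rewrite !natfE !same_order; split; rewrite ?mono.
apply: (@contains_at _ _ [:: i; j; k] (Ordinal kn)) => //.
- by move=> [|[|[|t]]] //= _; lia.
- by move=> [|[|[|t]]] [|[|[|u]]] //= _ _; lia.
- by move=> [|[|[|t]]] [|[|[|u]]] //= _ _; lia.
Qed.

Lemma contains2143 s : contains_pattern s [:: 2; 1; 4; 3] <-> pat2143 (natf s) n.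
Proof.
split=> [[f [mono same_order]] | [i [j [k [l [? ? ? ln [? ? ?]]]]]]].
  exists (f (@Ordinal 4 0 isT)), (f (@Ordinal 4 1 isT)), (f (@Ordinal 4 2 isT)),
    (f (@Ordinal 4 3 isT)).
  by rewrite !natfE !same_order; split; rewrite ?mono.
apply: (@contains_at _ _ [:: i; j; k; l] (Ordinal ln)) => //.
- by move=> [|[|[|[|t]]]] //= _; lia.
- by move=> [|[|[|[|t]]]] [|[|[|[|u]]]] //= _ _; lia.
- by move=> [|[|[|[|t]]]] [|[|[|[|u]]]] //= _ _; lia.
Qed.

Lemma contains4123 s : contains_pattern s [:: 4; 1; 2; 3] <-> pat4123 (natf s) n.
Proof.
split=> [[f [mono same_order]] | [i [j [k [l [? ? ? ln [? ? ?]]]]]]].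
  exists (f (@Ordinal 4 0 isT)), (f (@Ordinal 4 1 isT)), (f (@Ordinal 4 2 isT)),
    (f (@Ordinal 4 3 isT)).
  by rewrite !natfE !same_order; split; rewrite ?mono.
apply: (@contains_at _ _ [:: i; j; k; l] (Ordinal ln)) => //.
- by move=> [|[|[|[|t]]]] //= _; lia.
- by move=> [|[|[|[|t]]]] [|[|[|[|u]]]] //= _ _; lia.
- by move=> [|[|[|[|t]]]] [|[|[|[|u]]]] //= _ _; lia.
Qed.

Lemma fishburnE s : fishburn s <-> ~ fish_violation (natf s) n.
Proof.
split=> F [i [j]].
  move=> [ij jn i1n [ji ii1 succ]]; apply: F.
  have ilt : i < n by lia.
  exists (Ordinal ilt), (Ordinal jn), i1n.
  by move: ji ii1 succ; rewrite !natfO.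
move=> [i1n [ij ji ii1 succ]]; apply: F; exists i, j.
by rewrite !natfE (natfO s i1n).
Qed.

Definition pats := [:: [:: 3; 2; 1]; [:: 2; 1; 4; 3]; [:: 4; 1; 2; 3]].

Lemma in_F_avoider s : in_F pats s <-> avoider (natf s) n.
Proof.
split=> [[F A] | [N321 N2143 N4123 NF]].
  split; last exact/fishburnE.
  - by move/contains321; apply: A; rewrite !inE eqxx.
  - by move/contains2143; apply: A; rewrite !inE eqxx orbT.
  - by move/contains4123; apply: A; rewrite !inE eqxx !orbT.
split=> [|p]; first exact/fishburnE.
by rewrite !inE => /or3P [] /eqP -> /=;
  [move/contains321 | move/contains2143 | move/contains4123].
Qed.
End PermAsNat.

Lemma blk_moved a b i : a < b -> (blk a b i != i) = (a <= i <= b).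
Proof. move=> ab; blk_cases. Qed.

Lemma blk_determined n a b a' b' : a < b -> b < n -> a' < b' -> b' < n ->
  (forall i, i < n -> blk a b i = blk a' b' i) -> a = a' /\ b = b'.
Proof.
move=> ab bn ab' bn' same.
have interval i : i < n -> (a <= i <= b) = (a' <= i <= b').
  by move=> hi; rewrite -blk_moved // -blk_moved // same.
have := interval a; have := interval a'; have := interval b; have := interval b'.
rewrite !leqnn ?andbT; lia.
Qed.

Definition increasing_pairs n : {set 'I_n * 'I_n} := [set p : 'I_n * 'I_n | p.1 < p.2].

Lemma card_increasing_pairs n : #|increasing_pairs n| = 'C(n, 2).
Proof.
rewrite cardsE -sum1_card.
rewrite -(pair_big_dep xpredT (fun i j : 'I_n => i < j) (fun _ _ => 1)) /=.
rewrite (exchange_big_dep xpredT) //= -bin2_sum big_mkord; apply: eq_bigr => j _.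
rewrite -(big_ord_widen n (fun _ => 1) (ltnW (ltn_ord j))).
by rewrite sum1_card card_ord.
Qed.

Section AvoiderSet.
Variable n : nat.

Definition blk_ord (p : 'I_n * 'I_n) (i : 'I_n) : 'I_n :=
  if p.1 < p.2 then insubd i (blk p.1 p.2 i) else i.

Lemma blk_ord_val (p : 'I_n * 'I_n) (i : 'I_n) : p.1 < p.2 -> val (blk_ord p i) = blk p.1 p.2 i.
Proof. by move=> lt12; rewrite /blk_ord lt12 val_insubd blk_lt. Qed.

Lemma blk_ord_inj (p : 'I_n * 'I_n) : injective (blk_ord p).
Proof.
case: (ltnP p.1 p.2) => lt12; last by move=> x y; rewrite /blk_ord ltnNge lt12.
by move=> x y /(congr1 val); rewrite !blk_ord_val // => /blk_inj e; apply: val_inj; apply: e.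
Qed.

Definition blk_perm (p : 'I_n * 'I_n) : {perm 'I_n} := perm (@blk_ord_inj p).

Lemma natf_blk_perm (p : 'I_n * 'I_n) i : p.1 < p.2 -> i < n ->
  natf (blk_perm p) i = blk p.1 p.2 i.
Proof. by move=> lt12 hi; rewrite (natfO _ hi) permE blk_ord_val. Qed.

Lemma natf1 i : i < n -> natf (1%g : {perm 'I_n}) i = i.
Proof. by move=> hi; rewrite (natfO _ hi) perm1. Qed.

Definition avoider_set : {set {perm 'I_n}} :=
  1%g |: [set blk_perm p | p in increasing_pairs n].

Lemma mem_avoider_set s : s \in avoider_set <-> in_F pats s.
Proof.
rewrite in_F_avoider; split.
  rewrite !inE => /orP [/eqP -> | /imsetP [p]].
    by apply: avoider_ext (avoider_id n) => i /natf1.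
  rewrite inE => lt12 ->; apply: avoider_ext (blk_avoider lt12 n).
  by move=> i /(natf_blk_perm lt12).
move/(avoider_structure (natf_nat_perm s)).
case=> [is_id | [a [b [ab bn is_blk]]]]; rewrite !inE.
  apply/orP; left; apply/eqP/permP => x; apply: val_inj.
  by rewrite perm1 /= -natfE is_id.
apply/orP; right; apply/imsetP.
have an : a < n by lia.
exists (Ordinal an, Ordinal bn); first by rewrite inE.
apply/permP => x; apply: val_inj.
by rewrite /= -!natfE is_blk // natf_blk_perm.
Qed.

Lemma card_avoider_set : #|avoider_set| = 'C(n, 2) + 1.
Proof.
rewrite cardsU1 addnC; congr (_ + _); last first.
  apply/eqP; rewrite eqb1; apply/imsetP => -[p]; rewrite inE => lt12 e.
  have := congr1 (fun s => natf s p.1) e.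
  rewrite natf_blk_perm // natf1 // => fixed.
  by move: (blk_moved p.1 lt12); rewrite -fixed eqxx leqnn ltnW.
rewrite card_in_imset ?card_increasing_pairs // => p q; rewrite !inE => ltp ltq e.
have [] := @blk_determined n p.1 p.2 q.1 q.2 ltp (ltn_ord _) ltq (ltn_ord _).
  by move=> i hi; rewrite -natf_blk_perm // e natf_blk_perm.
by case: p q {ltp ltq e} => [x y] [x' y'] /= e1 e2; congr pair; apply: val_inj.
Qed.
End AvoiderSet.

Theorem mainTheorem12 (n : nat) :
  exists A : {set {perm 'I_n}},
    (forall s, s \in A <-> in_F [:: [:: 3; 2; 1]; [:: 2; 1; 4; 3]; [:: 4; 1; 2; 3]] s)
    /\ #|A| = 'C(n, 2) + 1.
Proof.
exists (avoider_set n); split; [exact: mem_avoider_set | exact: card_avoider_set].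
Qed.
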